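(* For $x,y\in\mathrm{dS}^d$ the following are equivalent: (i) $(x,y)\in G_{\mathbb C}.(\Xi_+\times\Xi_+)$; (ii) $\beta(x,y)>-1$; (iii) $\beta(x-y,x-y)<0$. In particular $\{x\in\mathrm{dS}^d:(x,e_1)\in G_{\mathbb C}.(\Xi_+\times\Xi_+)\}=\{x\in\mathrm{dS}^d: x_1<1\}$.
   Context: Let $d\ge1$. On $\mathbb C^{1+d}$ (standard basis $e_0,\dots,e_d$) let $\beta(z,w)=z_0w_0-z_1w_1-\dots-z_dw_d$, $V=\mathbb R^{1+d}$, $V_+=\{x\in V:x_0>0,\beta(x,x)>0\}$, $\mathrm{dS}^d_{\mathbb C}=\{z:\beta(z,z)=-1\}$, $\mathrm{dS}^d=\mathrm{dS}^d_{\mathbb C}\cap V$ (de Sitter space), $\Xi_+=\mathrm{dS}^d_{\mathbb C}\cap(V+iV_+)$. $G_{\mathbb C}=\mathrm{SO}_{1+d}(\mathbb C)$ (determinant-one complex linear maps preserving $\beta$) acts on pairs by $g.(z,w)=(gz,\overline g w)$, where $\overline g$ is the entrywise complex conjugate. *)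

From HB Require Import structures.
From mathcomp Require Import all_boot all_order all_algebra.
From mathcomp Require Import complex.
From mathcomp Require Import reals.
Set Implicit Arguments. Unset Strict Implicit. Unset Printing Implicit Defensive.
Import Order.TTheory GRing.Theory Num.Theory.
Local Open Scope ring_scope.

(* Ambient space K^{1+d} is modelled as column vectors 'cV[K]_(d.+1),
   with standard basis e_0, ..., e_d (e_i = delta_mx i 0). *)

Definition lsign {K : pzRingType} {n : nat} (i : 'I_n) : K :=
  if (i == 0 :> nat) then 1 else -1.

Definition beta {K : comPzRingType} {n : nat} (z w : 'cV[K]_n) : K :=
  \sum_(i < n) lsign i * z i 0 * w i 0.

Definition dS {R : realType} {d : nat} (x : 'cV[R]_(d.+1)) : Prop :=
  beta x x = -1.

Definition dSC {R : realType} {d : nat} (z : 'cV[R[i]]_(d.+1)) : Prop :=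
  beta z z = -1.

Definition Vplus {R : realType} {d : nat} (x : 'cV[R]_(d.+1)) : Prop :=
  0 < x 0 0 /\ 0 < beta x x.

Definition cplx {R : realType} {d : nat} (x : 'cV[R]_(d.+1)) : 'cV[R[i]]_(d.+1) :=
  map_mx (real_complex R) x.

Definition Xiplus {R : realType} {d : nat} (z : 'cV[R[i]]_(d.+1)) : Prop :=
  dSC z /\ Vplus (map_mx (@complex.Im R) z).

Definition SOC {R : realType} {d : nat} (g : 'M[R[i]]_(d.+1)) : Prop :=
  \det g = 1 /\ forall z w : 'cV[R[i]]_(d.+1), beta (g *m z) (g *m w) = beta z w.

Definition actC {R : realType} {d : nat} (g : 'M[R[i]]_(d.+1))
  (p : 'cV[R[i]]_(d.+1) * 'cV[R[i]]_(d.+1)) :=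
  (g *m p.1, map_mx (@conjc R) g *m p.2).

Definition in_GXi {R : realType} {d : nat}
  (p : 'cV[R[i]]_(d.+1) * 'cV[R[i]]_(d.+1)) : Prop :=
  exists g z w, [/\ SOC g, Xiplus z, Xiplus w & p = actC g (z, w)].

Definition evec {R : realType} {d : nat} (i : 'I_d.+1) : 'cV[R]_(d.+1) :=
  delta_mx i 0.

(* (ii) <-> (iii) since [beta (x - y) (x - y) = -2 - 2 beta x y] on dS.

   (i) -> (ii): if [x = g z] and [y = conj g w], then [y = g (conj w)], so
   [beta x y = beta z (conj w)].  Writing [z = a + i b], [w = c + i e] with
   [b, e] in V_+, reality of [beta z (conj w)] says that [a - c] is orthogonal
   to the timelike vector [b + e], hence not timelike, and
   [beta (a-c) (a-c) - beta (b+e) (b+e) = -2 - 2 beta x y].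

   (ii) -> (i): take [s] proportional to [x - y] with [beta s s = -1] and a
   future unit timelike [t] orthogonal to [s] with [|beta t x| < |beta s x|].
   The boost [g] of imaginary rapidity [-i pi/2] in the (t, s)-plane has
   [conj g = g^-1] and determinant 1, and [Im (conj g x)], [Im (g y)] are
   [-beta s x t + beta t x s] and [beta s y t - beta t y s], both in V_+;
   hence [(x, y) = g.(conj g x, g y)]. *)

From HB Require Import structures.
From mathcomp Require Import all_boot all_order all_algebra.
From mathcomp Require Import complex.
From mathcomp Require Import reals.
From mathcomp Require Import ring lra.
Import Order.TTheory GRing.Theory Num.Theory.
Set Implicit Arguments. Unset Strict Implicit. Unset Printing Implicit Defensive.
Local Open Scope complex_scope.
Local Open Scope ring_scope.
Local Notation Re := complex.Re.
Local Notation Im := complex.Im.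

Section LorentzForm.
Variables (K : comPzRingType) (n : nat).
Implicit Types (x y z : 'cV[K]_n) (A : 'M[K]_n).

Lemma betaC x y : beta x y = beta y x.
Proof. by rewrite /beta; apply: eq_bigr => i _; ring. Qed.

Lemma betaDl x y z : beta (x + y) z = beta x z + beta y z.
Proof. by rewrite /beta -big_split /=; apply: eq_bigr => i _; rewrite !mxE; ring. Qed.

Lemma betaDr x y z : beta z (x + y) = beta z x + beta z y.
Proof. by rewrite betaC betaDl !(betaC z). Qed.

Lemma betaZl a x y : beta (a *: x) y = a * beta x y.
Proof. by rewrite /beta mulr_sumr; apply: eq_bigr => i _; rewrite !mxE; ring. Qed.

Lemma betaZr a x y : beta y (a *: x) = a * beta y x.
Proof. by rewrite betaC betaZl betaC. Qed.

Lemma betaNl x y : beta (- x) y = - beta x y.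
Proof. by rewrite -scaleN1r betaZl mulN1r. Qed.

Lemma betaNr x y : beta y (- x) = - beta y x.
Proof. by rewrite -scaleN1r betaZr mulN1r. Qed.

Lemma betaBl x y z : beta (x - y) z = beta x z - beta y z.
Proof. by rewrite betaDl betaNl. Qed.

Lemma betaBr x y z : beta z (x - y) = beta z x - beta z y.
Proof. by rewrite betaDr betaNr. Qed.

Lemma beta_deltar z (j : 'I_n) : beta z (delta_mx j 0) = lsign j * z j 0.
Proof.
rewrite /beta (bigD1 j) //= big1 ?addr0; first by rewrite !mxE !eqxx mulr1.
by move=> i /negbTE neq_ij; rewrite !mxE neq_ij mulr0.
Qed.

Lemma lsign_sqr (i : 'I_n) : lsign i * lsign i = 1 :> K.
Proof. by rewrite /lsign; case: ifP; rewrite ?mulr1 ?mulrNN ?mulr1. Qed.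

Lemma det_isometry A : (forall z w, beta (A *m z) (A *m w) = beta z w) ->
  \det A * \det A = 1.
Proof.
move=> isoA; pose J : 'M[K]_n := diag_mx (\row_i lsign i).
have AtJA : A^T *m J *m A = J.
  apply/matrixP => i j; rewrite mul_mx_diag !mxE.
  have := isoA (delta_mx i 0) (delta_mx j 0).
  rewrite beta_deltar -!colE !mxE eqxx andbT mulr_natr => h.
  have -> : lsign i *+ (i == j) = lsign j *+ (j == i) :> K by rewrite eq_sym; case: eqP => [->|].
  by rewrite -h /beta; apply: eq_bigr => k _; rewrite !mxE; ring.
have detJ : \det J * \det J = 1.
  by rewrite det_diag -big_split /=; apply: big1 => i _; rewrite mxE lsign_sqr.
have := congr1 determinant AtJA; rewrite !det_mulmx det_tr => h.
rewrite -[LHS]mulr1 -detJ.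
by transitivity (\det A * \det J * \det A * \det J); [ring | rewrite h].
Qed.

Lemma mx_eq_col A B : (forall v : 'cV[K]_n, A *m v = B *m v) -> A = B.
Proof.
move=> eqAB; apply/matrixP => i j.
by have := congr1 (fun v : 'cV[K]_n => v i 0) (eqAB (delta_mx j 0)); rewrite -!colE !mxE.
Qed.

(* For [beta t t = 1], [beta s s = -1], [beta t s = 0] this maps [t] to
   [c t + b s], [s] to [b t + c s] and fixes [span(t, s)^⊥]: a hyperbolic
   rotation with "cosh" [c] and "sinh" [b]. *)
Definition boost (c b : K) (t s : 'cV[K]_n) : 'M[K]_n :=
  1%:M + \matrix_(i, j) (t i 0 * (lsign j * ((c - 1) * t j 0 - b * s j 0))
                       + s i 0 * (lsign j * (b * t j 0 - (c - 1) * s j 0))).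

Lemma boost_mulmx c b t s v : boost c b t s *m v =
  v + ((c - 1) * beta t v - b * beta s v) *: t
    + (b * beta t v - (c - 1) * beta s v) *: s.
Proof.
rewrite /boost mulmxDl mul1mx -addrA; congr (_ + _).
apply/matrixP => i k; rewrite (ord1 k) !mxE /beta !mulr_sumr -!sumrB !mulr_suml -big_split /=.
by apply: eq_bigr => j _; rewrite !mxE; ring.
Qed.

Lemma boost10 t s : boost 1 0 t s = 1%:M.
Proof. by apply/matrixP => i j; rewrite !mxE subrr !mul0r subrr !mulr0 !addr0. Qed.

Section OrthonormalPair.
Variables t s : 'cV[K]_n.
Hypotheses (tt1 : beta t t = 1) (ssN1 : beta s s = -1) (ts0 : beta t s = 0).

Lemma boost_isometry c b z w : c * c = 1 + b * b ->
  beta (boost c b t s *m z) (boost c b t s *m w) = beta z w.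
Proof.
move=> cb; rewrite !boost_mulmx !(betaDl, betaDr, betaZl, betaZr).
by rewrite (betaC z t) (betaC z s) (betaC s t) tt1 ssN1 ts0; ring: cb.
Qed.

Lemma boost_mul c1 b1 c2 b2 :
  boost c1 b1 t s *m boost c2 b2 t s = boost (c1 * c2 + b1 * b2) (c1 * b2 + b1 * c2) t s.
Proof.
apply: mx_eq_col => v; rewrite -mulmxA !boost_mulmx.
rewrite !(betaDl, betaDr, betaZl, betaZr) (betaC s t) tt1 ssN1 ts0.
by apply/matrixP => i k; rewrite !mxE; ring.
Qed.

End OrthonormalPair.
End LorentzForm.

Section TimeSpaceSplitting.
Variables (R : realFieldType) (d : nat).
Implicit Types p q t u : 'cV[R]_d.+1.

Definition spatial p q := \sum_(i < d) p (lift ord0 i) 0 * q (lift ord0 i) 0.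

Lemma beta_time_spatial p q : beta p q = p 0 0 * q 0 0 - spatial p q.
Proof.
rewrite /beta big_ord_recl /lsign /= mul1r /spatial -sumrN.
by congr (_ + _); apply: eq_bigr => i _; ring.
Qed.

Lemma spatial_ge0 p : 0 <= spatial p p.
Proof. by apply: sumr_ge0 => i _; rewrite -expr2 sqr_ge0. Qed.

(* [spatial (q0 p - p0 q) (q0 p - p0 q) >= 0] *)
Lemma spatial_mix_le p q :
  2 * (p 0 0 * q 0 0) * spatial p q <=
  q 0 0 ^+ 2 * spatial p p + p 0 0 ^+ 2 * spatial q q.
Proof.
rewrite -subr_ge0.
have <- : \sum_(i < d) (p (lift ord0 i) 0 * q 0 0 - p 0 0 * q (lift ord0 i) 0) ^+ 2
   = q 0 0 ^+ 2 * spatial p p + p 0 0 ^+ 2 * spatial q q - 2 * (p 0 0 * q 0 0) * spatial p q.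
  by rewrite /spatial !mulr_sumr -big_split -sumrB /=; apply: eq_bigr => i _; ring.
by apply: sumr_ge0 => i _; rewrite sqr_ge0.
Qed.

Lemma timelike_time_sqr_gt0 q : 0 < beta q q -> 0 < q 0 0 ^+ 2.
Proof. by rewrite beta_time_spatial -expr2 => qq; have := spatial_ge0 q; lra. Qed.

Lemma timelike_beta_sign u t : 0 < beta u u -> 0 < beta t t ->
  0 < u 0 0 * t 0 0 * beta u t.
Proof.
move=> uu tt; have u02 := timelike_time_sqr_gt0 uu; have t02 := timelike_time_sqr_gt0 tt.
move: uu tt; rewrite !beta_time_spatial => uu tt.
have mix := spatial_mix_le u t.
have ltA : t 0 0 ^+ 2 * spatial u u < t 0 0 ^+ 2 * (u 0 0 * u 0 0) by rewrite ltr_pM2l //; lra.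
have ltB : u 0 0 ^+ 2 * spatial t t < u 0 0 ^+ 2 * (t 0 0 * t 0 0) by rewrite ltr_pM2l //; lra.
rewrite !expr2 in ltA ltB mix; nra.
Qed.

Lemma orthogonal_timelike_le0 p q : 0 < beta q q -> beta p q = 0 -> beta p p <= 0.
Proof.
move=> qq pq0; have q02 := timelike_time_sqr_gt0 qq.
move: qq pq0; rewrite !beta_time_spatial => qq pq0.
have mix := spatial_mix_le p q.
have Spq : spatial p q = p 0 0 * q 0 0 by lra.
rewrite Spq in mix.
have : p 0 0 ^+ 2 * spatial q q <= p 0 0 ^+ 2 * (q 0 0 * q 0 0).
  by rewrite ler_wpM2l ?sqr_ge0 //; lra.
rewrite !expr2 in q02 mix *; nra.
Qed.

End TimeSpaceSplitting.

Section ForwardCone.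
Variables (R : realType) (d : nat).
Implicit Types a b t s : 'cV[R]_d.+1.

Lemma Vplus_beta_gt0 a b : Vplus a -> Vplus b -> 0 < beta a b.
Proof.
move=> [a0 aa] [b0 bb]; have := timelike_beta_sign aa bb.
by rewrite pmulr_rgt0 // mulr_gt0.
Qed.

Lemma VplusD a b : Vplus a -> Vplus b -> Vplus (a + b).
Proof.
move=> Va Vb; have ab := Vplus_beta_gt0 Va Vb; case: Va Vb => [a0 aa] [b0 bb].
by rewrite /Vplus mxE betaDl !betaDr (betaC b a); split; lra.
Qed.

Lemma Vplus_frame t s (a c : R) :
  beta t t = 1 -> beta s s = -1 -> beta t s = 0 -> 0 < t 0 0 ->
  0 < a -> c ^+ 2 < a ^+ 2 -> Vplus (a *: t + c *: s).
Proof.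
move=> tt ss ts t0 a0 ca; set u := a *: t + c *: s.
have uu : 0 < beta u u.
  rewrite !(betaDl, betaDr, betaZl, betaZr) tt ss ts (betaC s t) ts.
  by rewrite !expr2 in ca; lra.
have ut : 0 < beta u t by rewrite !(betaDl, betaZl) tt (betaC s t) ts; lra.
have tt0 : 0 < beta t t by rewrite tt ltr01.
have := timelike_beta_sign uu tt0.
by rewrite -mulrA pmulr_lgt0 ?mulr_gt0 // => u0; split.
Qed.

End ForwardCone.

Section ComplexParts.
Variable R : realType.
Implicit Types a b : R[i].

Lemma ReD a b : Re (a + b) = Re a + Re b. Proof. by case: a; case: b. Qed.
Lemma ImD a b : Im (a + b) = Im a + Im b. Proof. by case: a; case: b. Qed.
Lemma ReM a b : Re (a * b) = Re a * Re b - Im a * Im b. Proof. by case: a; case: b. Qed.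
Lemma ImM a b : Im (a * b) = Re a * Im b + Im a * Re b. Proof. by case: a; case: b. Qed.
Lemma ReJ a : Re a^* = Re a. Proof. by case: a. Qed.
Lemma ImJ a : Im a^* = - Im a. Proof. by case: a. Qed.

Lemma Re_sum (I : Type) (s : seq I) (P : pred I) (F : I -> R[i]) :
  Re (\sum_(i <- s | P i) F i) = \sum_(i <- s | P i) Re (F i).
Proof. exact: (big_morph _ ReD). Qed.

Lemma Im_sum (I : Type) (s : seq I) (P : pred I) (F : I -> R[i]) :
  Im (\sum_(i <- s | P i) F i) = \sum_(i <- s | P i) Im (F i).
Proof. exact: (big_morph _ ImD). Qed.

End ComplexParts.

Section Complexification.
Variables (R : realType) (d : nat).
Local Notation n := d.+1.
Implicit Types (z w : 'cV[R[i]]_n) (x y : 'cV[R]_n).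

Definition Re_mx z : 'cV[R]_n := map_mx (@Re R) z.
Definition Im_mx z : 'cV[R]_n := map_mx (@Im R) z.
Definition conj_mx {m p : nat} (A : 'M[R[i]]_(m, p)) := map_mx (@conjc R) A.

Lemma lsign_real (i : 'I_n) : lsign i = (lsign i : R)%:C.
Proof. by rewrite /lsign; case: ifP; rewrite ?rmorph1 ?rmorphN1. Qed.

Lemma Re_beta z w : Re (beta z w) = beta (Re_mx z) (Re_mx w) - beta (Im_mx z) (Im_mx w).
Proof.
rewrite /beta Re_sum -sumrB; apply: eq_bigr => i _.
by rewrite !ReM !ImM lsign_real !mxE /=; ring.
Qed.

Lemma Im_beta z w : Im (beta z w) = beta (Re_mx z) (Im_mx w) + beta (Im_mx z) (Re_mx w).
Proof.
rewrite /beta Im_sum -big_split; apply: eq_bigr => i _.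
by rewrite !ImM !ReM lsign_real !mxE /=; ring.
Qed.

Lemma beta_cplx x y : beta (cplx x) (cplx y) = (beta x y)%:C.
Proof. by rewrite /beta rmorph_sum; apply: eq_bigr => i _; rewrite !rmorphM lsign_real !mxE. Qed.

Lemma conj_cplx x : conj_mx (cplx x) = cplx x.
Proof. by apply/matrixP => i j; rewrite !mxE conjc_real. Qed.

Lemma conj_mxK m p (A : 'M[R[i]]_(m, p)) : conj_mx (conj_mx A) = A.
Proof. by apply/matrixP => i j; rewrite !mxE conjcK. Qed.

Lemma Re_mx_conj z : Re_mx (conj_mx z) = Re_mx z.
Proof. by apply/matrixP => i j; rewrite !mxE ReJ. Qed.

Lemma Im_mx_conj z : Im_mx (conj_mx z) = - Im_mx z.
Proof. by apply/matrixP => i j; rewrite !mxE ImJ. Qed.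

End Complexification.

Section TubeToBeta.
Variables (R : realType) (d : nat).
Local Notation n := d.+1.
Implicit Types (z w : 'cV[R[i]]_n) (x y : 'cV[R]_n).

Lemma Xiplus_beta_conj_gt z w : Xiplus z -> Xiplus w ->
  Im (beta z (conj_mx w)) = 0 -> -1 < Re (beta z (conj_mx w)).
Proof.
move=> [zz Vb] [ww Ve]; rewrite Re_beta Im_beta Re_mx_conj Im_mx_conj betaNr betaNr.
move: (congr1 (@Re R) zz) (congr1 (@Im R) zz) (congr1 (@Re R) ww) (congr1 (@Im R) ww).
rewrite !Re_beta !Im_beta /= !oppr0.
set a := Re_mx z; set b := Im_mx z; set c := Re_mx w; set e := Im_mx w.
rewrite (betaC b a) (betaC e c) => zRe zIm wRe wIm Im0.
have VQ : Vplus (b + e) := VplusD Vb Ve.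
have PQ : beta (a - c) (b + e) = 0.
  by rewrite betaBl !betaDr (betaC c b); lra.
have := orthogonal_timelike_le0 (proj2 VQ) PQ; have := proj2 VQ.
rewrite betaBl !betaBr !betaDl !betaDr (betaC c a) (betaC e b); lra.
Qed.

Lemma in_GXi_cplx x y : in_GXi (cplx x, cplx y) ->
  exists z w, [/\ Xiplus z, Xiplus w & (beta x y)%:C = beta z (conj_mx w)].
Proof.
move=> [g [z [w [[_ iso_g] Xz Xw /pair_equal_spec[ex ey]]]]]; exists z, w; split=> //.
have ey' : cplx y = g *m conj_mx w.
  by rewrite -conj_cplx ey /conj_mx map_mxM; congr (_ *m _); exact: conj_mxK.
by rewrite -beta_cplx ex ey' iso_g.
Qed.

Lemma in_GXi_beta_gt x y : in_GXi (cplx x, cplx y) -> -1 < beta x y.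
Proof.
move=> /in_GXi_cplx [z [w [Xz Xw xy]]].
by have := Xiplus_beta_conj_gt Xz Xw; rewrite -xy /=; apply.
Qed.

End TubeToBeta.

Lemma exists_unit_scale (R : rcfType) (T u : R) : 0 < T -> u != 0 ->
  exists l : R, l * l * T = 1 /\ 0 < l * u.
Proof.
move=> T0 u0; have q0 : 0 < Num.sqrt T by rewrite sqrtr_gt0.
have qq : Num.sqrt T * Num.sqrt T = T by rewrite -expr2 sqr_sqrtr // ltW.
have [lt_u0|gt_u0|eq_u0] := ltgtP u 0; last by rewrite eq_u0 eqxx in u0.
- exists (- (Num.sqrt T)^-1); split; first by rewrite mulrNN -{3}qq; field; rewrite gt_eqF.
  by rewrite mulNr -mulrN mulr_gt0 ?invr_gt0 // oppr_gt0.
- exists (Num.sqrt T)^-1; split; first by rewrite -{3}qq; field; rewrite gt_eqF.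
  by rewrite mulr_gt0 ?invr_gt0.
Qed.

Section AdaptedFrame.
Variables (R : rcfType) (d : nat).
Implicit Types (s m t : 'cV[R]_d.+1).

Lemma beta_e0l (v : 'cV[R]_d.+1) : beta (delta_mx 0 0) v = v 0 0.
Proof. by rewrite betaC beta_deltar /lsign /= mul1r. Qed.

(* The witness is [r + beta m r *: m] normalised, where [r] is the projection
   of [e_0] onto [s^⊥]; it is timelike and pairs with [m] below the bound
   whatever the causal character of [m]. *)
Lemma future_unit_orthogonal s m : beta s s = -1 -> beta m s = 0 ->
  0 < 1 + beta m m -> exists t,
  [/\ beta t t = 1, beta t s = 0, 0 < t 0 0 & beta t m ^+ 2 < 1 + beta m m].
Proof.
move=> ss ms mm; set s0 := s 0 0; set mu := beta m m in mm *.
set r := delta_mx 0 0 + s0 *: s.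
have rs : beta r s = 0 by rewrite betaDl betaZl ss beta_e0l -/s0; ring.
have rr : beta r r = 1 + s0 * s0.
  rewrite !(betaDl, betaDr, betaZl, betaZr) (betaC s) ss !beta_e0l mxE /= -/s0; ring.
clearbody r; set B := beta m r; set t' := r + B *: m.
have t's : beta t' s = 0 by rewrite betaDl betaZl rs ms; ring.
have t'm : beta t' m = B * (1 + mu) by rewrite betaDl betaZl (betaC r m) -/B -/mu; ring.
have t't : beta t' t' = 1 + s0 * s0 + B * B * (2 + mu).
  by rewrite !(betaDl, betaDr, betaZl, betaZr) rr (betaC r m) -/B -/mu; ring.
have gap : B * B * (1 + mu) < beta t' t'.
  by rewrite t't; have := sqr_ge0 s0; have := sqr_ge0 B; rewrite !expr2; nra.
have T0 : 0 < beta t' t' by apply: le_lt_trans gap; rewrite -expr2 mulr_ge0 ?sqr_ge0 ?ltW.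
have t'0 : t' 0 0 != 0.
  by apply: contraTneq (timelike_time_sqr_gt0 T0) => ->; rewrite expr0n ltxx.
have [l [ll lt'0]] := exists_unit_scale T0 t'0.
have l2 : 0 < l * l by move: (@ltr01 R); rewrite -ll pmulr_lgt0.
have : l * l * (B * B * (1 + mu)) < l * l * beta t' t' by rewrite ltr_pM2l.
rewrite ll => lt1.
exists (l *: t'); split.
- by rewrite betaZl betaZr mulrA.
- by rewrite betaZl t's mulr0.
- by rewrite mxE.
- by rewrite betaZl t'm expr2; nra.
Qed.

End AdaptedFrame.

Section DeSitterFrame.
Variables (R : realType) (d : nat).
Implicit Types (x y : 'cV[R]_d.+1).

Lemma adapted_frame x y : dS x -> dS y -> -1 < beta x y -> exists t s : 'cV[R]_d.+1,
  [/\ beta t t = 1, beta s s = -1, beta t s = 0, 0 < t 0 0 &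
      [/\ beta s x < 0, 0 < beta s y, beta t x ^+ 2 < beta s x ^+ 2
        & beta t y ^+ 2 < beta s y ^+ 2]].
Proof.
rewrite /dS => xx yy; set b := beta x y => b_gt.
have yx : beta y x = b by rewrite betaC.
have b2 : 0 < 2 + 2 * b by lra.
have [k [kk k0]] := exists_unit_scale b2 (oner_neq0 R).
rewrite mulr1 in k0.
set s := k *: (x - y); set m := 2^-1 *: (x + y).
have ss : beta s s = -1.
  rewrite betaZl betaZr betaBl !betaBr xx yy yx -/b.
  by transitivity (- (k * k * (2 + 2 * b))); [ring | rewrite kk].
have ms : beta m s = 0 by rewrite betaZl betaZr betaDl !betaBr xx yy yx -/b; ring.
have mm : 1 + beta m m = (1 + b) / 2.
  by rewrite betaZl betaZr betaDl !betaDr xx yy yx -/b; field.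
have mm0 : 0 < 1 + beta m m by rewrite mm; lra.
have [t [tt ts t0 tm]] := future_unit_orthogonal ss ms mm0.
have ty : beta t y = beta t x.
  by apply/eqP; move: ts; rewrite betaZr betaBr => /eqP; rewrite mulf_eq0 gt_eqF //= subr_eq0 eq_sym.
have tx : beta t m = beta t x by rewrite betaZr betaDr ty; field.
have sx : beta s x = - k * (1 + b) by rewrite betaZl betaBl xx yx; ring.
have sy : beta s y = k * (1 + b) by rewrite betaZl betaBl yy -/b; ring.
have sx2 : beta s x ^+ 2 = 1 + beta m m.
  by rewrite sx mm; transitivity (k * k * (2 + 2 * b) * ((1 + b) / 2)); [field | rewrite kk mul1r].
exists t, s; split=> //; split.
- by rewrite sx mulNr oppr_lt0 mulr_gt0 //; lra.
- by rewrite sy mulr_gt0 //; lra.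
- by rewrite -tx sx2.
- have sy2 : beta s y ^+ 2 = beta s x ^+ 2 by rewrite sx sy mulNr sqrrN.
  by rewrite ty -tx sy2 sx2.
Qed.

End DeSitterFrame.

Section ImaginaryBoost.
Variables (R : realType) (d : nat).
Local Notation n := d.+1.
Variables t s : 'cV[R]_n.
Local Notation boostC c b := (boost c b (cplx t) (cplx s)).

Lemma conj_boost c b : conj_mx (boostC c b) = boostC c^* b^*.
Proof.
rewrite /boost /conj_mx map_mxD map_mx1; congr (_ + _).
apply/matrixP => i j; rewrite !mxE lsign_real.
by case: c b => [c1 c2] [b1 b2] /=; congr Complex; ring.
Qed.

Lemma Im_boost0_cplx b v :
  Im_mx (boostC 0 b *m cplx v) = (- Im b * beta s v) *: t + (Im b * beta t v) *: s.
Proof.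
case: b => b1 b2; rewrite boost_mulmx !beta_cplx; apply/matrixP => i j; rewrite !mxE /=.
ring.
Qed.

Hypotheses (tt1 : beta t t = 1) (ssN1 : beta s s = -1) (ts0 : beta t s = 0).

Let ctt : beta (cplx t) (cplx t) = 1. Proof. by rewrite beta_cplx tt1. Qed.
Let css : beta (cplx s) (cplx s) = -1. Proof. by rewrite beta_cplx ssN1 rmorphN1. Qed.
Let cts : beta (cplx t) (cplx s) = 0. Proof. by rewrite beta_cplx ts0. Qed.

Section SquareRootOfMinusOne.
Variable b : R[i].
Hypothesis bb : b * b = -1.

Lemma boost0_isometry z w : beta (boostC 0 b *m z) (boostC 0 b *m w) = beta z w.
Proof. by rewrite (boost_isometry ctt css cts) // bb mul0r addrN. Qed.

Lemma boost0_mulN : boostC 0 b *m boostC 0 (- b) = 1%:M.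
Proof. by rewrite (boost_mul ctt css cts) mulrN bb opprK !mul0r mulr0 add0r addr0 boost10. Qed.

(* [boostC 0 b] is the square of [boostC c (b * c)] with [c ^+ 2 = 1/2], an
   isometry whose determinant is therefore [+1] or [-1]. *)
Lemma det_boost0 : \det (boostC 0 b) = 1.
Proof.
pose c : R[i] := (Num.sqrt 2^-1)%:C.
have cc : c * c * 2 = 1.
  rewrite -rmorphM -expr2 sqr_sqrtr ?invr_ge0 ?ler0n //.
  by rewrite -(rmorph_nat (real_complex R) 2) -rmorphM mulVf ?rmorph1 ?pnatr_eq0.
have -> : boostC 0 b = boostC c (b * c) *m boostC c (b * c).
  have c0 : c * c + b * c * (b * c) = 0 by rewrite mulrACA bb mulN1r addrN.
  have cb : c * (b * c) + b * c * c = b.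
    by transitivity (b * (c * c * 2)); [ring | rewrite cc mulr1].
  by rewrite (boost_mul ctt css cts) c0 cb.
rewrite det_mulmx det_isometry // => z w; rewrite (boost_isometry ctt css cts) // mulrACA bb mulN1r -cc; ring.
Qed.

Lemma Xiplus_boost0_cplx v : dS v -> 0 < t 0 0 ->
  0 < - Im b * beta s v -> (Im b * beta t v) ^+ 2 < (Im b * beta s v) ^+ 2 ->
  Xiplus (boostC 0 b *m cplx v).
Proof.
move=> vv t0 pos lt; split; first by rewrite /dSC boost0_isometry beta_cplx vv rmorphN1.
rewrite -[map_mx _ _]/(Im_mx _) Im_boost0_cplx.
by apply: Vplus_frame; rewrite // mulNr sqrrN.
Qed.

End SquareRootOfMinusOne.
End ImaginaryBoost.

Lemma actC_conj_inv (R : realType) (d : nat) (g h : 'M[R[i]]_d.+1) z w :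
  conj_mx g = h -> g *m h = 1%:M -> h *m g = 1%:M -> actC g (h *m z, g *m w) = (z, w).
Proof. by move=> gh1 gh hg; rewrite /actC /= -/(conj_mx g) gh1 !mulmxA gh hg !mul1mx. Qed.

Section BetaToTube.
Variables (R : realType) (d : nat).
Implicit Types x y : 'cV[R]_d.+1.

Lemma beta_gt_in_GXi x y : dS x -> dS y -> -1 < beta x y -> in_GXi (cplx x, cplx y).
Proof.
move=> xx yy xy; have [t [s [tt ss ts t0 [sx sy tx ty]]]] := adapted_frame xx yy xy.
have ii : 'i * 'i = -1 :> R[i] by rewrite -expr2 sqr_i.
have Nii : - 'i * - 'i = -1 :> R[i] by rewrite mulrNN.
pose g := boost 0 (- 'i) (cplx t) (cplx s); pose h := boost 0 'i (cplx t) (cplx s).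
have iso_g : forall z w, beta (g *m z) (g *m w) = beta z w := boost0_isometry tt ss ts Nii.
have gh : g *m h = 1%:M by have := boost0_mulN tt ss ts Nii; rewrite opprK.
have hg : h *m g = 1%:M := boost0_mulN tt ss ts ii.
have conj_g : conj_mx g = h.
  have c0 : (0 : R[i])^* = 0 by apply/eqP; rewrite eq_complex /= oppr0 !eqxx.
  have ci : (- 'i : R[i])^* = 'i by apply/eqP; rewrite eq_complex /= oppr0 opprK !eqxx.
  by rewrite conj_boost c0 ci.
have Xz : Xiplus (h *m cplx x).
  by apply: Xiplus_boost0_cplx; rewrite //= ?mulN1r ?mul1r ?oppr_gt0 ?sqrrN.
have Xw : Xiplus (g *m cplx y).
  by apply: Xiplus_boost0_cplx; rewrite //= ?opprK ?mul1r ?mulN1r ?sqrrN.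
exists g, (h *m cplx x), (g *m cplx y); split; [split | exact: Xz | exact: Xw |].
- exact: det_boost0 Nii.
- exact: iso_g.
- exact: (esym (actC_conj_inv _ _ conj_g gh hg)).
Qed.

End BetaToTube.

Lemma beta_e1 (R : realType) (d : nat) (x : 'cV[R]_d.+1) : (1 <= d)%N ->
  beta x (evec (inord 1)) = - x (inord 1) 0.
Proof. by move=> d1; rewrite /evec beta_deltar /lsign inordK // mulN1r. Qed.

Unset Implicit Arguments.

Theorem mainTheorem5 (R : realType) (d : nat) (hd : (1 <= d)%N) :
  (forall x y : 'cV[R]_(d.+1), dS x -> dS y ->
     (in_GXi (cplx x, cplx y) <-> -1 < beta x y) /\
     (-1 < beta x y <-> beta (x - y) (x - y) < 0)) /\
  (forall x : 'cV[R]_(d.+1),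
     (dS x /\ in_GXi (cplx x, cplx (evec (inord 1)))) <->
     (dS x /\ x (inord 1) 0 < 1)).
Proof.
have equiv (x y : 'cV[R]_d.+1) : dS x -> dS y ->
    (in_GXi (cplx x, cplx y) <-> -1 < beta x y) /\
    (-1 < beta x y <-> beta (x - y) (x - y) < 0).
  move=> xx yy; split.
    by split; [exact: in_GXi_beta_gt | exact: beta_gt_in_GXi].
  by move: xx yy; rewrite /dS betaBl !betaBr (betaC y x) => -> ->; split=> ?; lra.
split=> // x; set e1 : 'cV[R]_d.+1 := evec (inord 1).
have e1e1 : dS e1 by rewrite /dS beta_e1 // /e1 /evec mxE !eqxx.
split=> -[xx h]; split=> //; have [[to_beta to_tube] _] := equiv x e1 xx e1e1.
- by have := to_beta h; rewrite beta_e1 //; lra.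
- by apply: to_tube; rewrite beta_e1 //; lra.
Qed.
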